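(* Let $q$ be a prime power, $m$ a positive integer, and let $g_{11}(x),g_{12}(x),f_{11}(x),f_{12}(x)\in\mathbb{F}_q[x]$ be such that $g_{11}(x)\mid x^m-1$ and $f_{11}(x)\mid x^m-1$. Suppose $\gcd(g_{11}(x),g_{12}(x))=1$, $\gcd(f_{11}(x),f_{12}(x))=1$ and $\gcd(f_{11}(x),g_{11}(x))=1$. Then the following are equivalent: (1) $\gcd\left(\dfrac{x^m-1}{f_{11}(x)},\dfrac{x^m-1}{g_{11}(x)},\,g_{11}(x)f_{12}(x)-g_{12}(x)f_{11}(x)\right)=1$; (2) $\gcd\big(x^m-1,\,g_{11}(x)f_{12}(x)-g_{12}(x)f_{11}(x)\big)=1$. *)

From mathcomp Require Import all_boot all_algebra all_field.
Set Implicit Arguments.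
Unset Strict Implicit.
Unset Printing Implicit Defensive.

From mathcomp Require Import all_boot all_algebra all_field.
Import GRing.Theory.
Local Open Scope ring_scope.

(* With P = x^m - 1 and f, g coprime divisors of P, write P = C f g.  Then
   gcd(P / f, P / g) = C gcd(g, f) ~ C, so (1) says gcd(C, D) = 1.  The hypotheses
   make D = g f12 - g12 f coprime to f and to g (modulo f it is g f12, modulo g it
   is -g12 f), so gcd(C, D) = 1 is the same as gcd(C f g, D) = 1, which is (2). *)

Lemma coprimep_oppr (R : idomainType) (p q : {poly R}) :
  coprimep p (- q) = coprimep p q.
Proof.
by rewrite -scaleN1r (eqp_coprimepr _ (eqp_scale _ _)) // oppr_eq0 oner_eq0.
Qed.

Lemma coprimep_subr_mull (R : idomainType) (p q r : {poly R}) :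
  coprimep r (q - p * r) = coprimep r q.
Proof. by rewrite addrC -mulNr coprimep_addl_mul. Qed.

Section CoprimeDivisors.

Variable F : fieldType.
Implicit Types P f g D : {poly F}.

Lemma gcdp_divp_coprime {P f g} :
  P != 0 -> f %| P -> g %| P -> coprimep f g ->
  gcdp (P %/ f) (P %/ g) %= P %/ (f * g).
Proof.
move=> P0 fP gP cfg.
have f0 : f != 0 by apply: contraNneq P0 => f0; move: fP; rewrite f0 dvd0p.
have g0 : g != 0 by apply: contraNneq P0 => g0; move: gP; rewrite g0 dvd0p.
set C := P %/ (f * g).
have PE : P = C * (f * g) by rewrite divpK // Gauss_dvdp ?fP.
have -> : P %/ f = C * g by rewrite PE [f * g]mulrC mulrA mulpK.
have -> : P %/ g = C * f by rewrite PE mulrA mulpK.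
apply: eqp_trans (gcdp_mul2l _ _ _) _.
have C0 : C != 0 by apply: contraNneq P0 => C0; rewrite PE C0 mul0r.
by rewrite -{2}[C]mulr1 eqp_mul2l // gcdp_eqp1 coprimep_sym.
Qed.

Lemma coprimep_gcdp_divp P f g D :
  P != 0 -> f %| P -> g %| P -> coprimep f g ->
  coprimep f D -> coprimep g D ->
  coprimep (gcdp (P %/ f) (P %/ g)) D = coprimep P D.
Proof.
move=> P0 fP gP cfg cfD cgD.
rewrite (eqp_coprimepl _ (gcdp_divp_coprime P0 fP gP cfg)).
have {2}-> : P = P %/ (f * g) * (f * g) by rewrite divpK // Gauss_dvdp ?fP.
by rewrite !coprimepMl cfD cgD !andbT.
Qed.

End CoprimeDivisors.

Theorem lemma4p2 (F : finFieldType) (m : nat) (g11 g12 f11 f12 : {poly F}) :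
  (0 < m)%N ->
  g11 %| 'X^m - 1 -> f11 %| 'X^m - 1 ->
  coprimep g11 g12 -> coprimep f11 f12 -> coprimep f11 g11 ->
  (coprimep (gcdp (('X^m - 1) %/ f11) (('X^m - 1) %/ g11))
            (g11 * f12 - g12 * f11)
   <-> coprimep ('X^m - 1) (g11 * f12 - g12 * f11)).
Proof.
move=> m_gt0 gP fP cg cf cfg.
have P0 : 'X^m - 1 != 0 :> {poly F} by rewrite -size_poly_eq0 size_XnsubC.
have cfD : coprimep f11 (g11 * f12 - g12 * f11).
  by rewrite coprimep_subr_mull coprimepMr cfg cf.
have cgD : coprimep g11 (g11 * f12 - g12 * f11).
  rewrite -opprB [g11 * f12]mulrC coprimep_oppr coprimep_subr_mull.
  by rewrite coprimepMr cg coprimep_sym cfg.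
by rewrite coprimep_gcdp_divp.
Qed.
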